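(* Let $k$ be a field and $\mathsf{E}$ a left strictly locally finite $k$-linear category. Then the class of cofinite right $\mathsf{E}$-modules is closed under extensions in the category of right $\mathsf{E}$-modules: if $0\to L\to M\to N\to0$ is a short exact sequence of right $\mathsf{E}$-modules with $L$ and $N$ cofinite, then $M$ is cofinite.
   Context: A small $k$-linear category $\mathsf{E}$ has $k$-vector spaces $\operatorname{Hom}_\mathsf{E}(x,y)$, $k$-bilinear associative composition and identities with $\mathrm{id}_x\ne0$. A right $\mathsf{E}$-module is a $k$-linear functor $N:\mathsf{E}^{op}\to k\text{-Vect}$ (action maps $\operatorname{Hom}_\mathsf{E}(x,y)\otimes_kN(y)\to N(x)$). Write $x\preceq y$ if there are $n\ge1$ and objects $x=z_0,\dots,z_n=y$ with $\operatorname{Hom}_\mathsf{E}(z_{i-1},z_i)\neq0$ for all $i$; $x\prec y$ means $x\preceq y$ and not $y\preceq x$. $\mathsf{E}$ is locally finite if all Hom spaces are finite-dimensional and every $\{z:x\preceq z\preceq y\}$ is finite; left strictly locally finite if moreover for every $y$ there is a finite set $X_y$ of objects with $x\prec y$ for $x\in X_y$ such that every $f:z\to y$ with $z\prec y$ equals $\sum_{i=1}^nh_ig_i$ ($n\ge0$) with $g_i:z\to x_i$, $h_i:x_i\to y$, $x_i\in X_y$. A right $\mathsf{E}$-module $N$ is cofinite if for every object $y$ there is a finite set of objects $A$ such that the action map $\operatorname{Hom}_\mathsf{E}(x,y)\otimes_kN(y)\to N(x)$ vanishes for all $x\notin A$. *)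

From HB Require Import structures.
From mathcomp Require Import all_boot all_algebra.
From Stdlib Require Import Relations.
From Stdlib Require List.
Set Implicit Arguments. Unset Strict Implicit. Unset Printing Implicit Defensive.
Import GRing.Theory.
Local Open Scope ring_scope.

Record kcat (k : fieldType) := KCat {
  Obj : Type;
  Hom : Obj -> Obj -> lmodType k;
  comp : forall x y z, Hom y z -> Hom x y -> Hom x z;
  idm : forall x, Hom x x;
  comp_linl : forall x y z (a : k) (g g' : Hom y z) (f : Hom x y),
      comp (a *: g + g') f = a *: comp g f + comp g' f;
  comp_linr : forall x y z (a : k) (g : Hom y z) (f f' : Hom x y),
      comp g (a *: f + f') = a *: comp g f + comp g f';
  compA : forall w x y z (h : Hom y z) (g : Hom x y) (f : Hom w x),
      comp h (comp g f) = comp (comp h g) f;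
  comp1f : forall x y (f : Hom x y), comp (idm y) f = f;
  compf1 : forall x y (f : Hom x y), comp f (idm x) = f;
  idm_neq0 : forall x, idm x != 0
}.

Arguments Hom {k} _ _ _.
Arguments comp {k} _ {x y z}.
Arguments idm {k} _ x.

Definition fin_dim (k : fieldType) (V : lmodType k) : Prop :=
  exists s : seq V, forall v : V,
    exists c : 'I_(size s) -> k, v = \sum_(i < size s) c i *: s`_i.

Section Cat.
Variables (k : fieldType) (E : kcat k).

Definition hom_nz (x y : Obj E) : Prop := exists f : Hom E x y, f != 0.

Definition preceq : relation (Obj E) := clos_trans _ hom_nz.

Definition prec (x y : Obj E) : Prop := preceq x y /\ ~ preceq y x.

Definition locally_finite : Prop :=
  (forall x y : Obj E, fin_dim (Hom E x y)) /\
  (forall x y : Obj E, exists l : list (Obj E),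
      forall z, preceq x z -> preceq z y -> List.In z l).

Definition left_strictly_locally_finite : Prop :=
  locally_finite /\
  forall y : Obj E, exists X : list (Obj E),
    (forall x, List.In x X -> prec x y) /\
    forall (z : Obj E) (f : Hom E z y), prec z y ->
      exists (n : nat) (xs : 'I_n -> Obj E)
             (g : forall i, Hom E z (xs i)) (h : forall i, Hom E (xs i) y),
        (forall i, List.In (xs i) X) /\
        f = \sum_(i < n) comp E (h i) (g i).

(* right E-modules: k-linear functors E^op -> k-Vect *)
Record rmod := RMod {
  mobj : Obj E -> lmodType k;
  act : forall x y, Hom E x y -> mobj y -> mobj x;
  act_linl : forall x y (a : k) (f f' : Hom E x y) (n : mobj y),
      act (a *: f + f') n = a *: act f n + act f' n;
  act_linr : forall x y (a : k) (f : Hom E x y) (n n' : mobj y),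
      act f (a *: n + n') = a *: act f n + act f n';
  act_comp : forall x y z (g : Hom E y z) (f : Hom E x y) (n : mobj z),
      act (comp E g f) n = act f (act g n);
  act_id : forall x (n : mobj x), act (idm E x) n = n
}.

Arguments act _ {x y}.

Record rmorph (M N : rmod) : Type := RMorph {
  mfun : forall x, mobj M x -> mobj N x;
  mfun_lin : forall x (a : k) (m m' : mobj M x),
      @mfun x (a *: m + m') = a *: @mfun x m + @mfun x m';
  mfun_nat : forall x y (f : Hom E x y) (m : mobj M y),
      @mfun x (act M f m) = act N f (@mfun y m)
}.

Arguments mfun {M N} _ x.

Definition short_exact (L M N : rmod) (i : rmorph L M) (p : rmorph M N) : Prop :=
  forall x : Obj E,
    injective (mfun i x) /\
    (forall n : mobj N x, exists m, mfun p x m = n) /\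
    (forall m : mobj M x, mfun p x m = 0 <-> exists l, mfun i x l = m).

Definition cofinite (N : rmod) : Prop :=
  forall y : Obj E, exists A : list (Obj E),
    forall x : Obj E, ~ List.In x A ->
      forall (f : Hom E x y) (n : mobj N y), act N f n = 0.

End Cat.

(* Write m.f for the right action.  Fix y and a finite set A off which Hom(-, y)
   acts as zero on N(y); put P = y :: A.  For t in P and h : t -> y we show
   m.h.g = 0 for all g : x -> t, where x avoids an explicit finite set, by induction
   along the strict order restricted to the finite set P.  For g <> 0 and x outside
   the interval [t, t] we have x < t, so g factors through the finite set X_t of
   strict predecessors of t given by left strict local finiteness.  A factor through
   z in P is handled by induction.  For z outside P the element m.h.u (u : z -> t)
   is killed by p, hence comes from L(z), and Hom(x, z) acts as zero on L(z) once x
   avoids the finite set given by cofiniteness of L at z. *)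
From HB Require Import structures.
From Pilot Require Import Defs.
From mathcomp Require Import all_boot all_algebra.
From mathcomp Require Import boolp.
From Stdlib Require Import Relations.
From Stdlib Require List.
Set Implicit Arguments. Unset Strict Implicit. Unset Printing Implicit Defensive.
Import GRing.Theory.
Local Open Scope ring_scope.

Lemma count_lt_subpred (T : Type) (a b : pred T) (s : seq T) (z : T) :
  subpred a b -> List.In z s -> b z -> ~~ a z -> (count a s < count b s)%N.
Proof.
move=> ab; elim: s => [|w s IH] //= [<- | zs] bz naz.
  by rewrite bz (negbTE naz) add0n add1n ltnS sub_count.
rewrite -addnS leq_add ?IH //.
by case aw: (a w); rewrite ?(ab _ aw).
Qed.

Lemma list_choice_incl (T T' : Type) (Q : T -> seq T' -> Prop) (l : seq T) :
  (forall z, List.In z l -> exists A, Q z A) ->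
  exists B, forall z, List.In z l -> exists2 A, Q z A & List.incl A B.
Proof.
elim: l => [|a l IH] HQ; first by exists nil.
have [A QA] := HQ a (or_introl erefl).
have [B HB] := IH (fun z zl => HQ z (or_intror zl)).
exists (A ++ B)%list => z [<- | zl].
  by exists A => //; apply: List.incl_appl; apply: List.incl_refl.
by have [A' QA' iA'] := HB z zl; exists A' => //; apply: List.incl_appr.
Qed.

Definition act_on (k : fieldType) (E : kcat k) (R : rmod E) (x y : Obj E)
  (n : mobj R y) (f : Defs.Hom E x y) : mobj R x := act f n.

HB.instance Definition _ (k : fieldType) (E : kcat k) (R : rmod E) (x y : Obj E)
    (n : mobj R y) :=
  GRing.isLinear.Build k (Defs.Hom E x y) (mobj R x) *:%R (act_on n)
    (fun a f f' => @act_linl _ _ R x y a f f' n).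

HB.instance Definition _ (k : fieldType) (E : kcat k) (M N : rmod E)
    (i : rmorph M N) (x : Obj E) :=
  GRing.isLinear.Build k (mobj M x) (mobj N x) *:%R (@mfun _ _ M N i x)
    (@mfun_lin _ _ M N i x).

Section Category.
Variables (k : fieldType) (E : kcat k).

Definition act_vanishes (R : rmod E) (x y : Obj E) : Prop :=
  forall (f : Defs.Hom E x y) (n : mobj R y), act f n = 0.

Definition strictly_generated_by (X : seq (Obj E)) (y : Obj E) : Prop :=
  (forall x, List.In x X -> prec x y) /\
  forall (z : Obj E) (f : Defs.Hom E z y), prec z y ->
    exists (n : nat) (xs : 'I_n -> Obj E)
           (g : forall i, Defs.Hom E z (xs i)) (h : forall i, Defs.Hom E (xs i) y),
      (forall i, List.In (xs i) X) /\ f = \sum_(i < n) Defs.comp E (h i) (g i).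

Lemma act0 (R : rmod E) (x y : Obj E) (n : mobj R y) :
  act (0 : Defs.Hom E x y) n = 0.
Proof. exact: raddf0 (act_on n). Qed.

Lemma act_sum (R : rmod E) (x y : Obj E) (n : mobj R y) m
    (F : 'I_m -> Defs.Hom E x y) :
  act (\sum_(j < m) F j) n = \sum_(j < m) act (F j) n.
Proof. by rewrite -[LHS]/(act_on n _) raddf_sum. Qed.

Lemma preceq_hom (x y : Obj E) (f : Defs.Hom E x y) : f != 0 -> preceq x y.
Proof. by move=> fnz; apply: t_step; exists f. Qed.

Lemma preceq_refl (x : Obj E) : preceq x x.
Proof. exact/preceq_hom/idm_neq0. Qed.

Lemma count_preceq_lt (P : seq (Obj E)) (z t : Obj E) : List.In t P -> prec z t ->
  (count (fun v => `[< preceq v z >]) P < count (fun v => `[< preceq v t >]) P)%N.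
Proof.
move=> tP [zt tz]; apply: (count_lt_subpred (z := t)) => //.
- by move=> v /asboolP vz; apply/asboolP; apply: t_trans zt.
- exact/asboolP/preceq_refl.
- exact/asboolP.
Qed.

Lemma prec_ind_in (P : seq (Obj E)) (Q : Obj E -> Prop) :
  (forall t, List.In t P -> (forall z, List.In z P -> prec z t -> Q z) -> Q t) ->
  forall t, List.In t P -> Q t.
Proof.
move=> step t; set mu := fun t => count (fun v => `[< preceq v t >]) P.
elim: (mu t).+1 {-2}t (ltnSn (mu t)) => // n IH {}t; rewrite ltnS => lt_t tP.
apply: step => // z zP zt; apply: IH zP.
exact: leq_trans (count_preceq_lt tP zt) lt_t.
Qed.

End Category.

Section Extension.
Variables (k : fieldType) (E : kcat k) (L M N : rmod E).
Variables (i : rmorph L M) (p : rmorph M N).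
Hypothesis exact_ip : short_exact i p.

Lemma act_act_eq0_through_sub (x z y : Obj E) (g : Defs.Hom E x z)
    (f : Defs.Hom E z y) (m : mobj M y) :
  act f (mfun p m) = 0 -> act_vanishes L x z -> act g (act f m) = 0.
Proof.
rewrite -mfun_nat => pfm0 L0.
have [_ [_ ker_p]] := exact_ip z.
have [l <-] := (ker_p _).1 pfm0.
by rewrite -mfun_nat L0 raddf0.
Qed.

Variables (y x : Obj E) (P : seq (Obj E)).
Hypothesis quot_vanishes : forall z, ~ List.In z P -> act_vanishes N z y.
Hypothesis x_outside_intervals : forall t, List.In t P -> preceq x t -> ~ preceq t x.
Hypothesis sub_vanishes_on_generators : forall t, List.In t P ->
  exists2 X, strictly_generated_by X t & forall z, List.In z X -> act_vanishes L x z.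

Lemma act_act_eq0_in (t : Obj E) : List.In t P ->
  forall (h : Defs.Hom E t y) (g : Defs.Hom E x t) (m : mobj M y),
  act g (act h m) = 0.
Proof.
move: t; apply: prec_ind_in => t tP IH h g m.
have [->|gnz] := eqVneq g 0; first exact: act0.
have xt := preceq_hom gnz.
have [X [X_prec X_gen] L0] := sub_vanishes_on_generators tP.
have [n [zs [gs [hs [zsX ->]]]]] := X_gen x g (conj xt (x_outside_intervals tP xt)).
rewrite act_sum; apply: big1 => j _.
rewrite act_comp -(act_comp h).
have [zP | zP] := pselect (List.In (zs j) P).
  by apply: IH => //; apply: X_prec.
by apply: act_act_eq0_through_sub; [apply: quot_vanishes | apply: L0].
Qed.

Lemma act_vanishes_middle : List.In y P -> act_vanishes M x y.
Proof. by move=> yP f m; rewrite -(act_id m) act_act_eq0_in. Qed.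

End Extension.

Theorem lemma6p3 (k : fieldType) (E : kcat k)
  (HE : left_strictly_locally_finite E)
  (L M N : rmod E) (i : rmorph L M) (p : rmorph M N) :
  short_exact i p -> cofinite L -> cofinite N -> cofinite M.
Proof.
move=> exact_ip L_cof N_cof y.
have [[_ intervals_fin] gens] := HE.
have [AN AN_N] := N_cof y.
pose P := (y :: AN)%list.
have [XB XB_gens] :=
  @list_choice_incl _ _ (fun t X => strictly_generated_by X t) P (fun t _ => gens t).
have [IB IB_intervals] := list_choice_incl (fun t _ => intervals_fin t t) (l := P).
have [LB LB_L] := list_choice_incl (fun z _ => L_cof z) (l := XB).
exists (IB ++ LB)%list => x xB.
have [xIB xLB] : ~ List.In x IB /\ ~ List.In x LB.
  by split=> xS; apply: xB; apply: List.in_or_app; [left | right].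
change (act_vanishes M x y).
apply: (act_vanishes_middle (P := P) exact_ip _ _ _ (or_introl erefl)).
- by move=> z zP; apply: AN_N => zAN; apply: zP; right.
- move=> t tP xt tx; have [I I_interval /(_ x) I_IB] := IB_intervals t tP.
  exact/xIB/I_IB/I_interval.
- move=> t tP; have [X X_gen /(_ _) X_XB] := XB_gens t tP.
  exists X => // z zX; have [A A_L /(_ x) A_LB] := LB_L z (X_XB _ zX).
  by apply: A_L => xA; apply/xLB/A_LB.
Qed.
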